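(* Let $\varphi:\Lambda\to\Gamma$ be a regular covering map of finite simplicial graphs without isolated vertices. Then the sequences $$1\to\mathrm{FD}(\varphi)\to\mathrm{FAut}(\varphi)\to\mathrm{LAut}(\varphi)\to1$$ and $$1\to\mathrm{Deck}(\varphi)\to\mathrm{FAut}(\varphi)/(\mathrm{FAut}(\varphi)\cap\mathrm{IA}(A_\Lambda))\to\mathrm{LAut}(\varphi)/(\mathrm{LAut}(\varphi)\cap\mathrm{IA}(A_\Gamma))\to1$$ are exact, where the map $\mathrm{FAut}(\varphi)\to\mathrm{LAut}(\varphi)$ sends a lift $F$ to the automorphism $f$ it lifts, the second sequence has the maps induced by inclusion of $\mathrm{Deck}(\varphi)$ and by $F\mapsto f$.
   Context: Graphs are finite simplicial graphs; $A_\Gamma$ is the right-angled Artin group with generators $V\Gamma$ and relations $[u,v]=1$ for edges $\{u,v\}$. A covering map of graphs $\varphi:\Lambda\to\Gamma$ is a surjective simplicial map that maps the neighbours of each vertex $u$ bijectively onto the neighbours of $\varphi(u)$; $\mathrm{Deck}(\varphi)$ is the group of graph automorphisms $\mu$ of $\Lambda$ with $\varphi\mu=\varphi$, regarded as a subgroup of $\mathrm{Aut}(A_\Lambda)$; $\varphi$ is regular if $\mathrm{Deck}(\varphi)$ acts transitively on each fiber. Let $\phi:A_\Lambda\to A_\Gamma$ be induced by $\varphi$. $f\in\mathrm{Aut}(A_\Gamma)$ is liftable if there is $F\in\mathrm{Aut}(A_\Lambda)$ (a lift) with $f\circ\phi=\phi\circ F$ (since $\phi$ is surjective, $F$ determines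 $f$). $\mathrm{LAut}(\varphi)$ is the group of liftable automorphisms, $\mathrm{FAut}(\varphi)\le\mathrm{Aut}(A_\Lambda)$ the group of all lifts of liftable automorphisms, and $\mathrm{FD}(\varphi)$ the group of lifts of the identity. $\mathrm{IA}(A)$ denotes the kernel of the action of $\mathrm{Aut}(A)$ on $H_1(A)$. *)

(* Right-angled Artin groups presented by words modulo the
   congruence generated by the defining relations. *)
From mathcomp Require Import all_boot all_order all_algebra.
Set Implicit Arguments. Unset Strict Implicit. Unset Printing Implicit Defensive.
Import GRing.Theory.

Definition simple_graph (T : finType) (e : rel T) : Prop :=
  symmetric e /\ irreflexive e.

Definition no_isolated (T : finType) (e : rel T) : Prop :=
  forall v, exists u, e v u.

(* Words in the generators: (a,false) = a, (a,true) = a^-1. *)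
Definition word (T : Type) := seq (T * bool).

Definition gen (T : Type) (a : T) : word T := [:: (a, false)].

Definition winv (T : Type) (w : word T) : word T :=
  rev (map (fun p => (p.1, ~~ p.2)) w).

Inductive raag_eq (T : Type) (e : rel T) : word T -> word T -> Prop :=
| req_refl w : raag_eq e w w
| req_sym w1 w2 : raag_eq e w1 w2 -> raag_eq e w2 w1
| req_trans w1 w2 w3 : raag_eq e w1 w2 -> raag_eq e w2 w3 -> raag_eq e w1 w3
| req_cancel u v a b :
    raag_eq e (u ++ (a, b) :: (a, ~~ b) :: v) (u ++ v)
| req_comm u v a b c d : e a c ->
    raag_eq e (u ++ (a, b) :: (c, d) :: v) (u ++ (c, d) :: (a, b) :: v).

(* An endomorphism-candidate is given by the images of the generators. *)
Definition subst (T T' : Type) (f : T -> word T') (w : word T) : word T' :=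
  flatten (map (fun p => if p.2 then winv (f p.1) else f p.1) w).

(* The map on generators extends to a homomorphism A_T -> A_T'. *)
Definition is_hom (T T' : Type) (e : rel T) (e' : rel T') (f : T -> word T') : Prop :=
  forall a b, e a b -> raag_eq e' (f a ++ f b) (f b ++ f a).

Definition is_aut (T : Type) (e : rel T) (f : T -> word T) : Prop :=
  is_hom e e f /\
  exists g, is_hom e e g /\
    forall a, raag_eq e (subst f (g a)) (gen a) /\ raag_eq e (subst g (f a)) (gen a).

Definition aut_eq (T : Type) (e : rel T) (f g : T -> word T) : Prop :=
  forall a, raag_eq e (f a) (g a).

Definition autcomp (T : Type) (f g : T -> word T) : T -> word T :=
  fun a => subst f (g a).

Definition mapw (W V : Type) (phi : W -> V) (w : word W) : word V :=
  map (fun p => (phi p.1, p.2)) w.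

(* F lifts f : f o phi = phi o F (checked on generators, both sides being
   homomorphisms). *)
Definition lifts (W V : Type) (eG : rel V) (phi : W -> V)
    (F : W -> word W) (f : V -> word V) : Prop :=
  forall w, raag_eq eG (f (phi w)) (mapw phi (F w)).

Definition liftable (W V : Type) (eL : rel W) (eG : rel V) (phi : W -> V)
    (f : V -> word V) : Prop :=
  is_aut eG f /\ exists F, is_aut eL F /\ lifts eG phi F f.

Definition in_FAut (W V : Type) (eL : rel W) (eG : rel V) (phi : W -> V)
    (F : W -> word W) : Prop :=
  is_aut eL F /\ exists f, is_aut eG f /\ lifts eG phi F f.

Definition in_FD (W V : Type) (eL : rel W) (eG : rel V) (phi : W -> V)
    (F : W -> word W) : Prop :=
  is_aut eL F /\ lifts eG phi F (@gen V).

(* Action on H_1(A_T) = Z^T: exponent sum of generator b in a word. *)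
Definition expsum (T : eqType) (w : word T) (b : T) : int :=
  ((count (pred1 (b, false)) w)%:Z - (count (pred1 (b, true)) w)%:Z)%R.

Definition in_IA (T : eqType) (f : T -> word T) : Prop :=
  forall a b, expsum (f a) b = ((a == b : nat)%:Z)%R.

(* f and g induce the same action on H_1 (i.e. same coset modulo IA). *)
Definition same_H1 (T : eqType) (f g : T -> word T) : Prop :=
  forall a b, expsum (f a) b = expsum (g a) b.

Definition covering (W V : finType) (eL : rel W) (eG : rel V) (phi : W -> V) : Prop :=
  (forall v, exists w, phi w = v) /\
  (forall a b, eL a b -> eG (phi a) (phi b)) /\
  (forall u a b, eL u a -> eL u b -> phi a = phi b -> a = b) /\
  (forall u v, eG (phi u) v -> exists a, eL u a /\ phi a = v).

Definition deck (W V : finType) (eL : rel W) (phi : W -> V) (mu : W -> W) : Prop :=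
  bijective mu /\ (forall a b, eL (mu a) (mu b) = eL a b) /\
  (forall a, phi (mu a) = phi a).

Definition deck_aut (W : Type) (mu : W -> W) : W -> word W := fun w => gen (mu w).

Definition regular (W V : finType) (eL : rel W) (phi : W -> V) : Prop :=
  forall a b, phi a = phi b -> exists mu, deck eL phi mu /\ mu a = b.

From mathcomp Require Import all_boot all_order all_algebra.
From mathcomp Require Import zify ring.

(* The first sequence is formal: phi is onto on generators, so a lift F
   determines f, and F |-> f respects composition.  For the second one,
   H_1(phi) sums exponents over fibres, so F |-> f descends modulo IA.  For distinct non-adjacent generators p, q the
   signed count of "p before q" in a word is invariant under the relations of
   A_T and fails to be additive by e_p(x) e_q(y); hence commuting x, y have
   e_p(x) e_q(y) = e_p(y) e_q(x).  If f is in IA, the exponent vectors of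
   F a and F b (ab an edge) sum to deltas at phi a <> phi b over the fibres;
   the vanishing minors and the local injectivity of the covering then force
   the vector of F a to be a delta at a single vertex mu a over phi a, and
   applying the same argument to F and its inverse shows that mu is a deck
   transformation. *)

Set Implicit Arguments.
Unset Strict Implicit.
Unset Printing Implicit Defensive.
Import GRing.Theory.

Section WordInverse.
Variable T : Type.

Lemma winv_cat (x y : word T) : winv (x ++ y) = winv y ++ winv x.
Proof. by rewrite /winv map_cat rev_cat. Qed.

Lemma winv_cons (p : T * bool) (x : word T) :
  winv (p :: x) = winv x ++ [:: (p.1, ~~ p.2)].
Proof. by rewrite /winv /= rev_cons cats1. Qed.

Lemma winvK : involutive (@winv T).
Proof.
move=> x; rewrite /winv map_rev revK -map_comp.
by elim: x => [|[a b] x IH] //=; rewrite negbK IH.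
Qed.

End WordInverse.

Section RaagCongruence.
Variables (T : Type) (e : rel T).

Lemma raag_eq_catl u x y : raag_eq e x y -> raag_eq e (u ++ x) (u ++ y).
Proof.
elim=> [w|w1 w2 _ IH|w1 w2 w3 _ IH1 _ IH2|u' v a b|u' v a b c d hac].
- exact: req_refl.
- exact: req_sym.
- exact: req_trans IH2.
- by rewrite !catA; apply: req_cancel.
- by rewrite !catA; apply: req_comm.
Qed.

Lemma raag_eq_catr v x y : raag_eq e x y -> raag_eq e (x ++ v) (y ++ v).
Proof.
elim=> [w|w1 w2 _ IH|w1 w2 w3 _ IH1 _ IH2|u' v' a b|u' v' a b c d hac].
- exact: req_refl.
- exact: req_sym.
- exact: req_trans IH2.
- by rewrite -!catA /=; apply: req_cancel.
- by rewrite -!catA /=; apply: req_comm.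
Qed.

Lemma raag_eq_cat x x' y y' :
  raag_eq e x x' -> raag_eq e y y' -> raag_eq e (x ++ y) (x' ++ y').
Proof. by move=> hx hy; apply: req_trans (raag_eq_catr _ hx) (raag_eq_catl _ hy). Qed.

Lemma raag_eq_winv x y : raag_eq e x y -> raag_eq e (winv x) (winv y).
Proof.
elim=> [w|w1 w2 _ IH|w1 w2 w3 _ IH1 _ IH2|u v a b|u v a b c d hac].
- exact: req_refl.
- exact: req_sym.
- exact: req_trans IH2.
- rewrite !winv_cat /winv /= !rev_cons -!cats1 -!catA /=.
  by have := req_cancel e (winv v) (winv u) a (~~ ~~ b); rewrite negbK.
- rewrite !winv_cat /winv /= !rev_cons -!cats1 -!catA /=.
  by apply: req_sym; apply: req_comm.
Qed.

Lemma raag_eq_cat_winv x : raag_eq e (x ++ winv x) [::].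
Proof.
elim: x => [|[a b] x IH] /=; first exact: req_refl.
rewrite winv_cons catA -cat_cons.
apply: req_trans (raag_eq_catr _ (raag_eq_catl [:: (a, b)] IH)) _.
exact: (req_cancel e [::] [::] a b).
Qed.

Lemma raag_eq_winv_cat x : raag_eq e (winv x ++ x) [::].
Proof. by have := raag_eq_cat_winv (winv x); rewrite winvK. Qed.

Definition wcommute (x y : word T) := raag_eq e (x ++ y) (y ++ x).

Lemma wcommute_sym x y : wcommute x y -> wcommute y x.
Proof. exact: req_sym. Qed.

Lemma wcommuteVl x y : wcommute x y -> wcommute (winv x) y.
Proof.
move=> hxy; rewrite /wcommute.
have h1 : raag_eq e (winv x ++ y ++ x ++ winv x) (winv x ++ y).
  by have := raag_eq_catl (winv x ++ y) (raag_eq_cat_winv x); rewrite cats0 -!catA.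
have h2 : raag_eq e (winv x ++ y ++ x ++ winv x) (winv x ++ x ++ y ++ winv x).
  have := raag_eq_catl (winv x) (raag_eq_catr (winv x) (req_sym hxy)).
  by rewrite -!catA.
have h3 : raag_eq e (winv x ++ x ++ y ++ winv x) (y ++ winv x).
  by have := raag_eq_catr (y ++ winv x) (raag_eq_winv_cat x); rewrite -!catA.
exact: req_trans (req_sym h1) (req_trans h2 h3).
Qed.

Lemma wcommuteVr x y : wcommute x y -> wcommute x (winv y).
Proof. by move=> /wcommute_sym /wcommuteVl /wcommute_sym. Qed.

End RaagCongruence.

Section Substitution.
Variables (T T' : Type) (e : rel T) (e' : rel T').

Definition subst_letter (f : T -> word T') (p : T * bool) : word T' :=
  if p.2 then winv (f p.1) else f p.1.

Lemma subst_cons (f : T -> word T') p (x : word T) :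
  subst f (p :: x) = subst_letter f p ++ subst f x.
Proof. by []. Qed.

Lemma subst_cat (f : T -> word T') (x y : word T) :
  subst f (x ++ y) = subst f x ++ subst f y.
Proof. by rewrite /subst map_cat flatten_cat. Qed.

Lemma subst_raag_eq (f : T -> word T') (x y : word T) :
  is_hom e e' f -> raag_eq e x y -> raag_eq e' (subst f x) (subst f y).
Proof.
move=> hf.
elim=> [w|w1 w2 _ IH|w1 w2 w3 _ IH1 _ IH2|u v a b|u v a b c d hac].
- exact: req_refl.
- exact: req_sym.
- exact: req_trans IH2.
- rewrite !subst_cat !subst_cons; apply: raag_eq_catl; rewrite catA.
  have hab : raag_eq e' (subst_letter f (a, b) ++ subst_letter f (a, ~~ b)) [::].
    rewrite /subst_letter; case: b.
    - exact: raag_eq_winv_cat.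
    - exact: raag_eq_cat_winv.
  exact: raag_eq_catr _ hab.
- rewrite !subst_cat !subst_cons; apply: raag_eq_catl.
  rewrite !catA; apply: raag_eq_catr.
  have hc : wcommute e' (f a) (f c) := hf _ _ hac.
  rewrite /subst_letter; case: b; case: d => /=.
  + exact: wcommuteVl (wcommuteVr hc).
  + exact: wcommuteVl hc.
  + exact: wcommuteVr hc.
  + exact: hc.
Qed.

Lemma eq_subst_raag (f g : T -> word T') (x : word T) :
  (forall a, raag_eq e' (f a) (g a)) -> raag_eq e' (subst f x) (subst g x).
Proof.
move=> hfg; elim: x => [|[a b] x IH]; first exact: req_refl.
rewrite !subst_cons; apply: raag_eq_cat => //.
by rewrite /subst_letter; case: b => /=; [apply: raag_eq_winv|].
Qed.

End Substitution.

Section GraphMapOnWords.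
Variables (W V : Type) (phi : W -> V).

Lemma mapw_cat (x y : word W) : mapw phi (x ++ y) = mapw phi x ++ mapw phi y.
Proof. by rewrite /mapw map_cat. Qed.

Lemma mapw_winv (x : word W) : mapw phi (winv x) = winv (mapw phi x).
Proof. by rewrite /mapw /winv map_rev -!map_comp. Qed.

Lemma mapw_subst (F : W -> word W) z :
  mapw phi (subst F z) = subst (fun w => mapw phi (F w)) z.
Proof.
elim: z => [|[a b] z IH] //.
by rewrite !subst_cons mapw_cat IH /subst_letter; case: b; rewrite ?mapw_winv.
Qed.

Lemma subst_mapw (f : V -> word V) (z : word W) :
  subst f (mapw phi z) = subst (fun w => f (phi w)) z.
Proof. by elim: z => [|[a b] z IH] //; rewrite !subst_cons -IH. Qed.

End GraphMapOnWords.

Section ExponentSums.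
Local Open Scope ring_scope.
Variables (T : eqType) (e : rel T).

Definition sign (b : bool) : int := if b then -1 else 1.

Lemma expsum_cons (x : T) s (z : word T) b :
  expsum ((x, s) :: z) b = sign s * (x == b : nat)%:Z + expsum z b.
Proof. by rewrite /expsum /= !xpair_eqE eq_sym; case: s; case: (b == x) => /=; lia. Qed.

Lemma expsum_cat (x y : word T) b : expsum (x ++ y) b = expsum x b + expsum y b.
Proof. by rewrite /expsum !count_cat !PoszD; ring. Qed.

Lemma expsum_winv (x : word T) b : expsum (winv x) b = - expsum x b.
Proof.
elim: x => [|[a s] x IH] //.
by rewrite winv_cons expsum_cat IH !expsum_cons /expsum /=; case: s => /=; ring.
Qed.

Lemma expsum_gen (a b : T) : expsum (gen a) b = (a == b : nat)%:Z.
Proof. by rewrite /gen expsum_cons /= mul1r addr0. Qed.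

Lemma expsum_raag_eq (x y : word T) b : raag_eq e x y -> expsum x b = expsum y b.
Proof.
elim=> [w|w1 w2 _ IH|w1 w2 w3 _ IH1 _ IH2|u v a s|u v a s c d hac] //.
- by rewrite IH1.
- by rewrite !expsum_cat !expsum_cons /sign; case: s => /=; ring.
- by rewrite !expsum_cat !expsum_cons; ring.
Qed.

Fixpoint cross_count (p q : T) (w : word T) : int :=
  if w is (x, s) :: w' then
    (if x == p then sign s * expsum w' q else 0) + cross_count p q w'
  else 0.

Lemma cross_count_cat p q (x y : word T) :
  cross_count p q (x ++ y) =
  cross_count p q x + cross_count p q y + expsum x p * expsum y q.
Proof.
elim: x => [|[a s] x IH] /=; first by rewrite /expsum /=; ring.
by rewrite IH expsum_cat !expsum_cons; case: (a == p) => /=; ring.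
Qed.

Lemma cross_count_raag_eq p q (x y : word T) : p != q -> ~~ e p q -> ~~ e q p ->
  raag_eq e x y -> cross_count p q x = cross_count p q y.
Proof.
move=> hpq hepq heqp.
elim=> [w|w1 w2 _ IH|w1 w2 w3 _ IH1 _ IH2|u v a s|u v a s c d hac] //.
- by rewrite IH1.
- rewrite !cross_count_cat /= !expsum_cons.
  have : ~~ ((a == p) && (a == q)).
    by apply/negP => /andP[/eqP hap /eqP haq]; rewrite -hap -haq eqxx in hpq.
  by rewrite /sign; case: (a == p); case: (a == q); case: s => //= _; ring.
- rewrite !cross_count_cat /= !expsum_cons.
  have : ~~ ((a == p) && (c == q)).
    by apply/negP => /andP[/eqP hap /eqP hcq]; rewrite -hap -hcq hac in hepq.
  have : ~~ ((c == p) && (a == q)).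
    by apply/negP => /andP[/eqP hcp /eqP haq]; rewrite -haq -hcp hac in heqp.
  by case: (a == p); case: (c == q); case: (c == p); case: (a == q) => //= _ _; ring.
Qed.

Lemma wcommute_expsum_minor p q (x y : word T) : p != q -> ~~ e p q -> ~~ e q p ->
  wcommute e x y -> expsum x p * expsum y q = expsum y p * expsum x q.
Proof.
move=> hpq hepq heqp /(cross_count_raag_eq hpq hepq heqp).
by rewrite !cross_count_cat; lia.
Qed.

End ExponentSums.

Section ExponentSumsOfImages.
Local Open Scope ring_scope.
Variables (W V : finType).

Lemma sum_eqz_mul (a : W) (g : W -> int) :
  \sum_(r : W) (a == r : nat)%:Z * g r = g a.
Proof.
rewrite (bigD1 a) //= eqxx mul1r big1 ?addr0 // => r hr.
by rewrite eq_sym (negbTE hr) mul0r.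
Qed.

Lemma expsum_subst (f : W -> word V) (z : word W) q :
  expsum (subst f z) q = \sum_(r : W) expsum z r * expsum (f r) q.
Proof.
elim: z => [|[a s] z IH].
  by rewrite big1 // => r _; rewrite mul0r.
rewrite subst_cons expsum_cat IH.
under [RHS]eq_bigr => r _ do rewrite expsum_cons mulrDl -mulrA.
rewrite big_split /= -mulr_sumr sum_eqz_mul /subst_letter.
by case: s => /=; rewrite ?expsum_winv; ring.
Qed.

Lemma expsum_mapw (phi : W -> V) (z : word W) g :
  expsum (mapw phi z) g = \sum_(r | phi r == g) expsum z r.
Proof.
elim: z => [|[a s] z IH]; first by rewrite big1.
under [RHS]eq_bigr => r _ do rewrite expsum_cons.
rewrite (expsum_cons (phi a) s (mapw phi z)) IH [RHS]big_split /= -mulr_sumr.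
congr (_ * _ + _); rewrite big_mkcond (bigD1 a) //= eqxx big1 ?addr0.
  by case: (phi a == g).
by move=> r hr; rewrite [a == r]eq_sym (negbTE hr); case: (phi r == g).
Qed.

End ExponentSumsOfImages.

Section PlaneVectors.
Local Open Scope ring_scope.

Lemma proportional_to_independent_eq0 (R : idomainType) (a b c d u v : R) :
  a * d != b * c -> a * v = b * u -> u * d = v * c -> u = 0 /\ v = 0.
Proof.
rewrite -subr_eq0 => hD hab hcd.
have hu : (a * d - b * c) * u = a * (u * d - v * c) + c * (a * v - b * u) by ring.
have hv : (a * d - b * c) * v = b * (u * d - v * c) + d * (a * v - b * u) by ring.
rewrite hab hcd !subrr !mulr0 addr0 in hu hv.
by move: hu hv => /eqP + /eqP; rewrite !mulf_eq0 (negbTE hD) => /eqP -> /eqP ->.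
Qed.

Lemma exists_nonzero_minor (R : comNzRingType) (I : finType) (P Q : pred I)
    (x y : I -> R) p :
  \sum_(i | P i) x i = 1 -> \sum_(i | P i) y i = 0 ->
  \sum_(i | Q i) x i = 0 -> \sum_(i | Q i) y i = 1 ->
  (x p != 0) || (y p != 0) -> exists r, x p * y r != y p * x r.
Proof.
move=> xP yP xQ yQ nz_p.
have [/existsP //|/existsPn minor0] := boolP [exists r, x p * y r != y p * x r].
have sum_minor (S : pred I) : x p * \sum_(r | S r) y r = y p * \sum_(r | S r) x r.
  by rewrite !mulr_sumr; apply: eq_bigr => r _; apply/eqP/negPn/minor0.
have := sum_minor P; rewrite xP yP mulr0 mulr1 => /esym yp0.
have := sum_minor Q; rewrite xQ yQ mulr0 mulr1 => xp0.
by rewrite xp0 yp0 eqxx in nz_p.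
Qed.

End PlaneVectors.

Section FibreColumns.
Local Open Scope ring_scope.
Variables (W V : finType) (eL : rel W) (eG : rel V) (phi : W -> V).

Definition fibre_sums_delta (x : W -> int) (v : V) :=
  forall g, \sum_(q | phi q == g) x q = (v == g : nat)%:Z.

Definition nonadjacent_minors0 (x y : W -> int) :=
  forall p q, p != q -> ~~ eL p q -> x p * y q = y p * x q.

Lemma fibre_sums_delta_single x v :
  fibre_sums_delta x v ->
  (forall p p', phi p = phi p' -> x p != 0 -> x p' != 0 -> p = p') ->
  exists2 a', phi a' = v & forall q, x q = (a' == q : nat)%:Z.
Proof.
move=> hx supp_uniq.
have x_fibre q : x q != 0 -> x q = (v == phi q : nat)%:Z.
  move=> nz_q; rewrite -hx (bigD1 q) //= big1 ?addr0 // => q' /andP[/eqP hq' ne_q'q].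
  apply/eqP/negPn/negP => nz_q'.
  by rewrite (supp_uniq _ _ hq' nz_q' nz_q) eqxx in ne_q'q.
have [a' /andP[/eqP ha' nz_a'] | fibre0] := pickP [pred q | (phi q == v) && (x q != 0)].
  exists a' => // q; have [<- | ne_a'q] := eqVneq a' q.
    by rewrite x_fibre // ha' !eqxx.
  apply/eqP/negPn/negP => nz_q; have := x_fibre q nz_q.
  have [hq _ | _ xq0] := v =P phi q; last by rewrite xq0 eqxx in nz_q.
  by rewrite -ha' in hq; rewrite (supp_uniq _ _ hq nz_a' nz_q) eqxx in ne_a'q.
have := hx v; rewrite eqxx big1 // => q /eqP hq.
by move: (fibre0 q); rewrite /= hq eqxx /= => /negbFE/eqP.
Qed.

Hypotheses (irrG : irreflexive eG)
  (phi_edge : forall a b, eL a b -> eG (phi a) (phi b))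
  (phi_locally_inj : forall u p p', eL u p -> eL u p' -> phi p = phi p' -> p = p').

Section TwoColumns.
Variables (x y : W -> int) (a b : W).
Hypotheses (ne_ab : phi a != phi b) (x_delta : fibre_sums_delta x (phi a))
  (y_delta : fibre_sums_delta y (phi b)) (minors0 : nonadjacent_minors0 x y).

Lemma fibre_nonzero_minor p :
  (x p != 0) || (y p != 0) -> exists r, x p * y r != y p * x r.
Proof.
apply: (@exists_nonzero_minor _ _ (fun q => phi q == phi a) (fun q => phi q == phi b)).
- by rewrite x_delta eqxx.
- by rewrite y_delta eq_sym (negbTE ne_ab).
- by rewrite x_delta (negbTE ne_ab).
- by rewrite y_delta eqxx.
Qed.

Lemma fibre_support_uniq p p' : phi p = phi p' ->
  (x p != 0) || (y p != 0) -> (x p' != 0) || (y p' != 0) -> p = p'.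
Proof.
move=> hpp' nz_p nz_p'; apply/eqP/negPn/negP => ne_pp'.
have nadj_pp' : ~~ eL p p' by apply/negP => /phi_edge; rewrite hpp' irrG.
have [r hr] := fibre_nonzero_minor nz_p.
have hr' : x p' * y r != y p' * x r.
  apply/negP => /eqP hp'r.
  have [xp'0 yp'0] := proportional_to_independent_eq0 hr (minors0 ne_pp' nadj_pp') hp'r.
  by rewrite xp'0 yp'0 eqxx in nz_p'.
have adj_r q : x q * y r != y q * x r -> eL r q.
  move=> hq; apply/negPn/negP => nadj.
  have ne_rq : r != q by apply: contraNneq hq => ->; rewrite mulrC.
  by move: hq; rewrite mulrC [y q * _]mulrC (minors0 ne_rq nadj) eqxx.
by rewrite (phi_locally_inj (adj_r _ hr) (adj_r _ hr') hpp') eqxx in ne_pp'.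
Qed.

Lemma fibre_column_delta :
  exists2 a', phi a' = phi a & forall q, x q = (a' == q : nat)%:Z.
Proof.
apply: fibre_sums_delta_single => // p p' hpp' nz_p nz_p'.
by apply: fibre_support_uniq; rewrite ?nz_p ?nz_p'.
Qed.

End TwoColumns.

End FibreColumns.

Lemma gen_is_aut (T : Type) (e : rel T) : is_aut e (@gen T).
Proof.
have gen_hom : is_hom e e (@gen T).
  by move=> a b hab; apply: (@req_comm _ e [::] [::] a false b false).
by split=> //; exists (@gen T); split=> // a; split; apply: req_refl.
Qed.

Section Lifts.
Variables (W V : finType) (eL : rel W) (eG : rel V) (phi : W -> V).

Lemma lifts_eq_aut F f g : aut_eq eG f g -> lifts eG phi F f -> lifts eG phi F g.
Proof. by move=> hfg hF w; apply: req_trans (req_sym (hfg _)) (hF w). Qed.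

Lemma lifts_autcomp F1 F2 f1 f2 : is_hom eG eG f1 ->
  lifts eG phi F1 f1 -> lifts eG phi F2 f2 ->
  lifts eG phi (autcomp F1 F2) (autcomp f1 f2).
Proof.
move=> hf1 l1 l2 w; apply: req_trans (subst_raag_eq hf1 (l2 w)) _.
by rewrite subst_mapw mapw_subst; apply: eq_subst_raag.
Qed.

Lemma deck_is_aut mu : deck eL phi mu -> is_aut eL (deck_aut mu).
Proof.
move=> [[nu muK nuK] [mu_edge _]].
have nu_edge a b : eL (nu a) (nu b) = eL a b by rewrite -mu_edge !nuK.
split.
  by move=> a b hab; apply: (@req_comm _ eL [::] [::] _ false _ false); rewrite mu_edge.
exists (deck_aut nu); split.
  by move=> a b hab; apply: (@req_comm _ eL [::] [::] _ false _ false); rewrite nu_edge.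
by move=> a; rewrite /deck_aut /subst /= muK nuK; split; apply: req_refl.
Qed.

Lemma deck_lifts_gen mu : deck eL phi mu -> lifts eG phi (deck_aut mu) (@gen V).
Proof. by move=> [_ [_ phi_mu]] w; rewrite /mapw /= phi_mu; apply: req_refl. Qed.

Lemma deck_aut_H1_inj (mu1 mu2 : W -> W) :
  same_H1 (deck_aut mu1) (deck_aut mu2) -> mu1 =1 mu2.
Proof.
move=> h a; have := h a (mu1 a); rewrite !expsum_gen eqxx.
by case: (mu2 a =P mu1 a).
Qed.

Hypothesis phi_onto : forall v, exists w, phi w = v.

Lemma lifts_aut_eq F f1 f2 :
  lifts eG phi F f1 -> lifts eG phi F f2 -> aut_eq eG f1 f2.
Proof.
move=> l1 l2 v; have [w <-] := phi_onto v.
exact: req_trans (l1 w) (req_sym (l2 w)).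
Qed.

Lemma lifts_same_H1 F1 F2 f1 f2 : lifts eG phi F1 f1 -> lifts eG phi F2 f2 ->
  same_H1 F1 F2 -> same_H1 f1 f2.
Proof.
move=> l1 l2 hF v g; have [w <-] := phi_onto v.
rewrite (expsum_raag_eq g (l1 w)) (expsum_raag_eq g (l2 w)) !expsum_mapw.
by apply: eq_bigr => q _; apply: hF.
Qed.

End Lifts.

Section KernelOnHomology.
Local Open Scope ring_scope.
Variables (W V : finType) (eL : rel W) (eG : rel V) (phi : W -> V).
Hypotheses (symL : symmetric eL) (irrL : irreflexive eL) (irrG : irreflexive eG)
  (noisoL : no_isolated eL)
  (phi_edge : forall a b, eL a b -> eG (phi a) (phi b))
  (phi_locally_inj : forall u p p', eL u p -> eL u p' -> phi p = phi p' -> p = p').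

Lemma lift_IA_fibre_sums F f : lifts eG phi F f -> in_IA f ->
  forall a, fibre_sums_delta phi (expsum (F a)) (phi a).
Proof. by move=> hl hIA a g; rewrite -expsum_mapw -(expsum_raag_eq g (hl a)). Qed.

Lemma hom_nonadjacent_minors0 (H : W -> word W) a b : is_hom eL eL H -> eL a b ->
  nonadjacent_minors0 eL (expsum (H a)) (expsum (H b)).
Proof.
move=> hH hab p q ne_pq nadj.
have nadj' : ~~ eL q p by rewrite symL.
exact: wcommute_expsum_minor ne_pq nadj nadj' (hH _ _ hab).
Qed.

Lemma lift_IA_expsum_delta F f : is_hom eL eL F -> lifts eG phi F f -> in_IA f ->
  forall a, exists2 a', phi a' = phi a & forall q, expsum (F a) q = (a' == q : nat)%:Z.
Proof.
move=> hF hl hIA a; have [b hab] := noisoL a.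
have ne_ab : phi a != phi b.
  by apply/eqP => hab'; have := phi_edge hab; rewrite hab' irrG.
have [x_delta y_delta] := (lift_IA_fibre_sums hl hIA a, lift_IA_fibre_sums hl hIA b).
exact: (fibre_column_delta irrG phi_edge phi_locally_inj ne_ab x_delta y_delta
  (hom_nonadjacent_minors0 hF hab)).
Qed.

Lemma expsum_delta_adjacent (H : W -> word W) a b a' b' : is_hom eL eL H -> eL a b ->
  (forall q, expsum (H a) q = (a' == q : nat)%:Z) ->
  (forall q, expsum (H b) q = (b' == q : nat)%:Z) -> a' != b' -> eL a' b'.
Proof.
move=> hH hab ha hb ne_a'b'; apply/negPn/negP => nadj.
have := hom_nonadjacent_minors0 hH hab ne_a'b' nadj.
by rewrite !ha !hb !eqxx eq_sym (negbTE ne_a'b').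
Qed.

Lemma expsum_delta_deck F mu : is_aut eL F -> (forall a, phi (mu a) = phi a) ->
  (forall a q, expsum (F a) q = (mu a == q : nat)%:Z) -> deck eL phi mu.
Proof.
move=> [hF [G [hG FGK]]] phi_mu F_delta.
have G_delta a q : expsum (G (mu a)) q = (a == q : nat)%:Z.
  rewrite -expsum_gen -(expsum_raag_eq q (FGK a).2) expsum_subst.
  by under eq_bigr => r _ do rewrite F_delta; rewrite sum_eqz_mul.
have mu_inj : injective mu.
  by move=> a b hab; have := G_delta a a; rewrite hab G_delta eqxx; case: (b =P a).
split; first exact: injF_bij.
split=> // a b; apply/idP/idP => hab.
  have ne_ab : a != b by apply: contraTneq hab => ->; rewrite irrL.
  exact: expsum_delta_adjacent hG hab (G_delta a) (G_delta b) ne_ab.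
have ne_ab : mu a != mu b.
  by apply/eqP => hmu; have := phi_edge hab; rewrite -phi_mu -(phi_mu b) hmu irrG.
exact: expsum_delta_adjacent hF hab (F_delta a) (F_delta b) ne_ab.
Qed.

Lemma lift_IA_deck F f : is_aut eL F -> lifts eG phi F f -> in_IA f ->
  exists2 mu, deck eL phi mu & same_H1 F (deck_aut mu).
Proof.
move=> hF hl hIA.
have [mu phi_mu F_delta] := fin_all_exists2 (lift_IA_expsum_delta hF.1 hl hIA).
exists mu; first exact: (expsum_delta_deck hF phi_mu F_delta).
by move=> a q; rewrite expsum_gen F_delta.
Qed.

End KernelOnHomology.

Theorem corollary7p4 (V W : finType) (eG : rel V) (eL : rel W) (phi : W -> V)
  (hG : simple_graph eG) (hL : simple_graph eL)
  (hGi : no_isolated eG) (hLi : no_isolated eL)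
  (hcov : covering eL eG phi) (hreg : regular eL phi) :
  (* ---- first sequence: 1 -> FD -> FAut -> LAut -> 1 ---- *)
  (* F |-> f is well defined *)
  (forall F f1 f2, is_aut eL F -> is_aut eG f1 -> is_aut eG f2 ->
     lifts eG phi F f1 -> lifts eG phi F f2 -> aut_eq eG f1 f2) /\
  (* F |-> f is a homomorphism *)
  (forall F1 F2 f1 f2, is_aut eL F1 -> is_aut eL F2 -> is_aut eG f1 -> is_aut eG f2 ->
     lifts eG phi F1 f1 -> lifts eG phi F2 f2 ->
     lifts eG phi (autcomp F1 F2) (autcomp f1 f2)) /\
  (* FD is included in FAut *)
  (forall F, in_FD eL eG phi F -> in_FAut eL eG phi F) /\
  (* exactness at FAut: kernel of F |-> f is FD *)
  (forall F f, in_FAut eL eG phi F -> is_aut eG f -> lifts eG phi F f ->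
     (aut_eq eG f (@gen V) <-> in_FD eL eG phi F)) /\
  (* surjectivity onto LAut *)
  (forall f, liftable eL eG phi f -> exists F, in_FAut eL eG phi F /\ lifts eG phi F f) /\
  (* ---- second sequence: 1 -> Deck -> FAut/IA -> LAut/IA -> 1 ---- *)
  (* Deck lies in FAut and maps to the identity of LAut *)
  (forall mu, deck eL phi mu ->
     in_FAut eL eG phi (deck_aut mu) /\ lifts eG phi (deck_aut mu) (@gen V)) /\
  (* Deck -> FAut/(FAut cap IA) is injective *)
  (forall mu1 mu2, deck eL phi mu1 -> deck eL phi mu2 ->
     same_H1 (deck_aut mu1) (deck_aut mu2) -> mu1 =1 mu2) /\
  (* the induced map FAut/IA -> LAut/IA is well defined *)
  (forall F1 F2 f1 f2, in_FAut eL eG phi F1 -> in_FAut eL eG phi F2 ->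
     is_aut eG f1 -> is_aut eG f2 -> lifts eG phi F1 f1 -> lifts eG phi F2 f2 ->
     same_H1 F1 F2 -> same_H1 f1 f2) /\
  (* exactness in the middle: the kernel is contained in the image of Deck *)
  (forall F f, in_FAut eL eG phi F -> is_aut eG f -> lifts eG phi F f -> in_IA f ->
     exists mu, deck eL phi mu /\ same_H1 F (deck_aut mu)).
Proof.
have [[symL irrL] [_ irrG]] := (hL, hG).
have [phi_onto [phi_edge [phi_locally_inj _]]] := hcov.
split; first by move=> F f1 f2 _ _ _; apply: lifts_aut_eq.
split; first by move=> F1 F2 f1 f2 _ _ [hf1 _] _; apply: lifts_autcomp.
have gen_in_FAut F : is_aut eL F -> lifts eG phi F (@gen V) -> in_FAut eL eG phi F.
  by move=> hF hl; split=> //; exists (@gen V); split=> //; apply: gen_is_aut.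
split; first by move=> F [hF hl]; apply: gen_in_FAut.
split.
  move=> F f [hF _] _ hl; split=> [f_id | [_ hl_id]]; last exact: lifts_aut_eq.
  by split=> //; apply: lifts_eq_aut hl.
split; first by move=> f [hf [F [hF hl]]]; exists F; split=> //; split=> //; exists f.
split.
  move=> mu hmu; have hl := deck_lifts_gen eG hmu.
  by split=> //; apply: gen_in_FAut (deck_is_aut hmu) hl.
split; first by move=> mu1 mu2 _ _; apply: deck_aut_H1_inj.
split; first by move=> F1 F2 f1 f2 _ _ _ _; apply: lifts_same_H1.
move=> F f [hF _] _ hl hIA.
have [mu] := lift_IA_deck symL irrL irrG hLi phi_edge phi_locally_inj hF hl hIA.
by exists mu.
Qed.
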